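(* Let $\models$ be an intersective mixed consequence truth-relation on a finite set $V$ of truth values, with induced consequence relation $\vdash$ in a constant expressive setting. The following are equivalent: (i) $\vdash$ admits both a G-disjunction and a G-conjunction; (ii) every minimal representation of $\models$ is based on a disjunction-conjunction-compatible list of sets of designated values; (iii) some representation of $\models$ is based on a disjunction-conjunction-compatible list of sets of designated values.
   Context: $V$ contains distinct $1,0$; sets of designated values: $\mathcal{D}\subseteq V$, $1\in\mathcal{D}$, $0\notin\mathcal{D}$. $\gamma\models_{\mathcal{D}_p,\mathcal{D}_c}\delta$ iff ($\gamma\subseteq\mathcal{D}_p\Rightarrow\delta\cap\mathcal{D}_c\neq\emptyset$). An intersective mixed truth-relation is $\models_{\mathcal{D}_p^1,\mathcal{D}_c^1}\cap\dots\cap\models_{\mathcal{D}_p^K,\mathcal{D}_c^K}$; such a list is a representation, based on the list $\mathcal{D}_p^1,\mathcal{D}_c^1,\dots,\mathcal{D}_p^K,\mathcal{D}_c^K$; minimal if $K$ is least possible. A list $\mathcal{D}_1,\dots,\mathcal{D}_n$ is disjunction-conjunction-compatible if (DC1) for each $\mathcal{D}_i$, either some truth value belongs to $\mathcal{D}_i$ and to no other set of the list, or $\mathcal{D}_i$ is included in another, distinct set of the list; and (DC2) for every non-empty sublist $\mathcal{D}'_1,\dots,\mathcal{D}'_{n'}$ there is $x\in V$ such that for every $i$: $x\in\mathcal{D}_i$ iff $\exists i'$ with $\mathcal{D}'_{i'}\subseteq\mathcal{D}_i$. Semantics: valuations mapping atoms to $V$, connectives interpreted by fixed truth functions, extended compositionally,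 every assignment to finitely many distinct atoms realized; constant expressive: every value is the constant value of some formula. $\Gamma\vdash\Delta$ iff $v(\Gamma)\models v(\Delta)$ for all $v$; $\Gamma,A=\Gamma\cup\{A\}$. G-conjunction: $\Gamma,A\wedge B\vdash\Delta$ iff $\Gamma,A,B\vdash\Delta$; $\Gamma\vdash A\wedge B,\Delta$ iff ($\Gamma\vdash A,\Delta$ and $\Gamma\vdash B,\Delta$). G-disjunction: $\Gamma\vdash A\vee B,\Delta$ iff $\Gamma\vdash A,B,\Delta$; $\Gamma,A\vee B\vdash\Delta$ iff ($\Gamma,A\vdash\Delta$ and $\Gamma,B\vdash\Delta$); all for every $\Gamma,\Delta,A,B$. *)

From mathcomp Require Import all_boot.
From mathcomp Require Import boolp.

Set Implicit Arguments.
Unset Strict Implicit.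
Unset Printing Implicit Defensive.

Definition designated (V : finType) (one zero : V) (D : {set V}) : bool :=
  (one \in D) && (zero \notin D).

Definition mtr (V : finType) (Dp Dc : {set V}) (g d : {set V}) : bool :=
  (g \subset Dp) ==> (d :&: Dc != set0).

Definition is_rep (V : finType) (one zero : V)
    (R : {set V} -> {set V} -> bool) (L : seq ({set V} * {set V})) : Prop :=
  [/\ L != [::],
      all (fun p => designated one zero p.1 && designated one zero p.2) L
    & forall g d : {set V}, R g d = all (fun p => mtr p.1 p.2 g d) L].

Definition intersective_mixed (V : finType) (one zero : V)
    (R : {set V} -> {set V} -> bool) : Prop :=
  exists L, is_rep one zero R L.

Definition minimal_rep (V : finType) (one zero : V)
    (R : {set V} -> {set V} -> bool) (L : seq ({set V} * {set V})) : Prop :=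
  is_rep one zero R L /\
  forall L', is_rep one zero R L' -> size L <= size L'.

Definition based_list (V : finType) (L : seq ({set V} * {set V})) : seq {set V} :=
  flatten [seq [:: p.1; p.2] | p <- L].

Definition DC1 (V : finType) (L : seq {set V}) : Prop :=
  forall D, D \in L ->
    (exists x, x \in D /\ forall D', D' \in L -> x \in D' -> D' = D) \/
    (exists D', [/\ D' \in L, D' != D & D \subset D']).

Definition DC2 (V : finType) (L : seq {set V}) : Prop :=
  forall L' : seq {set V}, subseq L' L -> L' != [::] ->
    exists x : V, forall D, D \in L ->
      (x \in D) = has (fun D' : {set V} => D' \subset D) L'.

Definition dc_compatible (V : finType) (L : seq {set V}) : Prop :=
  DC1 L /\ DC2 L.

Inductive form (C : Type) (ar : C -> nat) : Type :=
  | Var : nat -> form ar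
  | App : forall c : C, ('I_(ar c) -> form ar) -> form ar.

Fixpoint eval (V : Type) (C : Type) (ar : C -> nat)
    (interp : forall c : C, ('I_(ar c) -> V) -> V) (v : nat -> V)
    (A : form ar) {struct A} : V :=
  match A with
  | Var n => v n
  | App c a => interp c (fun i => eval interp v (a i))
  end.

Definition constant_expressive (V : Type) (C : Type) (ar : C -> nat)
    (interp : forall c : C, ('I_(ar c) -> V) -> V) : Prop :=
  forall x : V, exists A : form ar, forall v : nat -> V, eval interp v A = x.

Definition imgv (V : finType) (C : Type) (ar : C -> nat)
    (interp : forall c : C, ('I_(ar c) -> V) -> V) (v : nat -> V)
    (G : form ar -> Prop) : {set V} :=
  [set x | `[< exists A, G A /\ eval interp v A = x >] ].

Definition conseq (V : finType) (C : Type) (ar : C -> nat)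
    (interp : forall c : C, ('I_(ar c) -> V) -> V)
    (R : {set V} -> {set V} -> bool) (G D : form ar -> Prop) : Prop :=
  forall v : nat -> V, R (imgv interp v G) (imgv interp v D).

Definition add (F : Type) (G : F -> Prop) (A : F) : F -> Prop :=
  fun B => G B \/ B = A.

Definition G_conjunction (F : Type) (cs : (F -> Prop) -> (F -> Prop) -> Prop)
    (cj : F -> F -> F) : Prop :=
  forall (G D : F -> Prop) (A B : F),
    (cs (add G (cj A B)) D <-> cs (add (add G A) B) D) /\
    (cs G (add D (cj A B)) <-> (cs G (add D A) /\ cs G (add D B))).

Definition G_disjunction (F : Type) (cs : (F -> Prop) -> (F -> Prop) -> Prop)
    (dj : F -> F -> F) : Prop :=
  forall (G D : F -> Prop) (A B : F),
    (cs G (add D (dj A B)) <-> cs G (add (add D A) B)) /\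
    (cs (add G (dj A B)) D <-> (cs (add G A) D /\ cs (add G B) D)).

(* extension of the language by two new binary connectives:
   inr true (to be the conjunction) and inr false (the disjunction) *)
Definition ext_ar (C : Type) (ar : C -> nat) (c : C + bool) : nat :=
  match c with inl c0 => ar c0 | inr _ => 2 end.

Definition ext_interp (V : Type) (C : Type) (ar : C -> nat)
    (interp : forall c : C, ('I_(ar c) -> V) -> V) (fc fd : V -> V -> V) :
    forall c : C + bool, ('I_(ext_ar ar c) -> V) -> V :=
  fun c => match c as c0 return ('I_(ext_ar ar c0) -> V) -> V with
  | inl c0 => interp c0
  | inr b => fun a : 'I_2 -> V => (if b then fc else fd) (a ord0) (a ord_max)
  end.

Definition mk2 (C : Type) (ar : C -> nat) (b : bool)
    (A B : form (ext_ar ar)) : form (ext_ar ar) :=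
  @App _ (ext_ar ar) (inr b) (fun i : 'I_2 => if i == ord0 then A else B).

(* |- admits both a G-disjunction and a G-conjunction: there are truth functions
   which, interpreting two new binary connectives, make the induced consequence
   relation (on the extended language) satisfy the G-rules *)
Definition admits_Gdisj_Gconj (V : finType) (C : Type) (ar : C -> nat)
    (interp : forall c : C, ('I_(ar c) -> V) -> V)
    (R : {set V} -> {set V} -> bool) : Prop :=
  exists fc fd : V -> V -> V,
    G_conjunction (conseq (ext_interp interp fc fd) R) (@mk2 C ar true) /\
    G_disjunction (conseq (ext_interp interp fc fd) R) (@mk2 C ar false).

(* Everything is decided by how two binary truth functions behave on the sets
   of designated values.  Under constant expressiveness, the G-rules for
   connectives interpreted by fc and fd are identities of the truth relation
   on sets of values; an intersective mixed relation satisfies them as soon as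
   fc is a meet and fd a join on every designated set of a representation.
   Conversely, in a minimal representation no component is implied by another,
   so each designated set can be probed on its own by the pair
   (Dp^k u Z, (V - Dc^k) u W); this forces fc and fd to be meet and
   join there.  Finally, a list of sets containing 1 and avoiding 0 carries such
   a meet and such a join iff it satisfies DC2: the join of the meets of the
   members of a sublist is a DC2 witness, and DC2 conversely realizes every
   membership pattern that is upward closed.  DC1 follows from DC2 applied to
   singleton sublists. *)

From mathcomp Require Import all_boot.
From mathcomp Require Import boolp.

Set Implicit Arguments.
Unset Strict Implicit.
Unset Printing Implicit Defensive.

Section DesignatedLists.
Variables (V : finType) (one zero : V).

Definition conj_on (D : {set V}) (f : V -> V -> V) : Prop :=
  forall a b, (f a b \in D) = (a \in D) && (b \in D).

Definition disj_on (D : {set V}) (f : V -> V -> V) : Prop :=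
  forall a b, (f a b \in D) = (a \in D) || (b \in D).

Lemma based_listP (L : seq ({set V} * {set V})) (P : {set V} -> Prop) :
  {in based_list L, forall D : {set V}, P D} <-> {in L, forall p, P p.1 /\ P p.2}.
Proof.
split=> hP p => [pL | /flattenP [_ /mapP [q qL ->]]].
  by split; apply: hP; apply/flattenP; exists [:: p.1; p.2];
    rewrite ?map_f ?inE ?eqxx ?orbT.
by rewrite !inE => /orP [] /eqP ->; have [] := hP q qL.
Qed.

Lemma DC2_DC1 (S : seq {set V}) : DC2 S -> DC1 S.
Proof.
move=> dc2 D DS.
have [|noSup] := pselect (exists D', [/\ D' \in S, D' != D & D \subset D']).
  by right.
left; have [|//|x hx] := dc2 [:: D]; first by rewrite sub1seq.
exists x; split=> [|D' D'S]; first by rewrite hx //= subxx.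
rewrite hx //= orbF => DD'; apply: contra_notP noSup => D'D.
by exists D'; split=> //; apply/eqP.
Qed.

Lemma dc_compatible_DC2 (S : seq {set V}) : dc_compatible S <-> DC2 S.
Proof. by split=> [[] | dc2] //; split=> //; apply: DC2_DC1. Qed.

(* DC2 says nothing about the empty sublist; its pattern is realized by [zero]. *)
Lemma DC2_up_closed_witness (S : seq {set V}) (Q : pred {set V}) :
  {in S, forall D : {set V}, zero \notin D} -> DC2 S ->
  {in S &, forall D D' : {set V}, D' \subset D -> Q D' -> Q D} ->
  exists x, {in S, forall D : {set V}, (x \in D) = Q D}.
Proof.
move=> S0 dc2 Qup.
case SQ: (filter Q S) => [|D0 s].
  exists zero => D DS; rewrite (negbTE (S0 D DS)); apply/esym/negP => QD.
  by have := mem_filter Q D S; rewrite SQ DS QD.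
have [||x hx] := dc2 (filter Q S); [exact: filter_subseq | by rewrite SQ |].
exists x => D DS; rewrite hx //; apply/hasP/idP => [[D'] | QD].
  by rewrite mem_filter => /andP [QD' D'S] D'D; apply: (Qup D D').
by exists D; rewrite ?mem_filter ?QD.
Qed.

Lemma conj_on_foldr D f (s : seq V) :
  conj_on D f -> one \in D -> (foldr f one s \in D) = all [in D] s.
Proof. by move=> fD oneD; elim: s => //= y s IH; rewrite fD IH. Qed.

Lemma disj_on_foldr D f (s : seq V) :
  disj_on D f -> zero \notin D -> (foldr f zero s \in D) = has [in D] s.
Proof.
by move=> fD zeroD; elim: s => [|y s IH] /=; rewrite ?fD ?IH ?(negbTE zeroD).
Qed.

Lemma DC2_conj_disjP (S : seq {set V}) :
  {in S, forall D : {set V}, designated one zero D} ->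
  DC2 S <-> (exists fc, {in S, forall D : {set V}, conj_on D fc}) /\
            (exists fd, {in S, forall D : {set V}, disj_on D fd}).
Proof.
move=> Sdes; have S0 D : D \in S -> zero \notin D by case/Sdes/andP.
split=> [dc2 | [[fc fcS] [fd fdS]]].
  have /choice [fc fcS] : forall ab : V * V,
      exists x, {in S, forall D : {set V}, (x \in D) = (ab.1 \in D) && (ab.2 \in D)}.
    move=> ab; apply: DC2_up_closed_witness => // D D' _ _ /subsetP D'D.
    by case/andP=> /D'D -> /D'D ->.
  have /choice [fd fdS] : forall ab : V * V,
      exists x, {in S, forall D : {set V}, (x \in D) = (ab.1 \in D) || (ab.2 \in D)}.
    move=> ab; apply: DC2_up_closed_witness => // D D' _ _ /subsetP D'D.
    by case/orP=> /D'D ->; rewrite ?orbT.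
  by split; [exists (fun a b => fc (a, b)) | exists (fun a b => fd (a, b))]
    => D DS a b; rewrite (fcS, fdS).
(* The join of the meets of the members of a sublist is its witness. *)
move=> S' _ _.
exists (foldr fd zero [seq foldr fc one (enum D') | D' : {set V} <- S']).
move=> D DS; have /andP [oneD zeroD] := Sdes D DS.
rewrite (disj_on_foldr _ (fdS D DS)) // has_map; apply: eq_has => D' /=.
by rewrite (conj_on_foldr _ (fcS D DS)) // -subset_all (eq_subset (mem_enum D')).
Qed.

End DesignatedLists.

Section Representations.
Variables (V : finType) (one zero : V).
Implicit Types (R : {set V} -> {set V} -> bool) (L : seq ({set V} * {set V})).

Definition set_G_conjunction R (f : V -> V -> V) : Prop :=
  forall g d a b,
    R (g :|: [set f a b]) d = R (g :|: [set a] :|: [set b]) d /\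
    R g (d :|: [set f a b]) = R g (d :|: [set a]) && R g (d :|: [set b]).

Definition set_G_disjunction R (f : V -> V -> V) : Prop :=
  forall g d a b,
    R g (d :|: [set f a b]) = R g (d :|: [set a] :|: [set b]) /\
    R (g :|: [set f a b]) d = R (g :|: [set a]) d && R (g :|: [set b]) d.

Lemma setU1I_neq0 (d D : {set V}) c :
  ((d :|: [set c]) :&: D != set0) = (d :&: D != set0) || (c \in D).
Proof. by rewrite setIUl setU_eq0 negb_and (setI_eq0 [set c]) disjoints1 negbK. Qed.

Lemma mtr_set_G_conjunction Dp Dc f :
  conj_on Dp f -> conj_on Dc f -> set_G_conjunction (mtr Dp Dc) f.
Proof.
move=> fDp fDc g d a b; rewrite /mtr !subUset !sub1set !setU1I_neq0 fDp fDc.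
by rewrite andbA; split=> //; case: (g \subset Dp) => //=; rewrite orb_andr.
Qed.

Lemma mtr_set_G_disjunction Dp Dc f :
  disj_on Dp f -> disj_on Dc f -> set_G_disjunction (mtr Dp Dc) f.
Proof.
move=> fDp fDc g d a b; rewrite /mtr !subUset !sub1set !setU1I_neq0 fDp fDc.
rewrite orbA; split=> //.
by case: (g \subset Dp) (a \in Dp) (b \in Dp) => [] [] []; rewrite /= ?andbb ?andbT.
Qed.

Lemma set_G_conjunction_all (I : eqType) (s : seq I) F R f :
  (forall g d, R g d = all (fun i => F i g d) s) ->
  {in s, forall i, set_G_conjunction (F i) f} -> set_G_conjunction R f.
Proof.
move=> RF Ff g d a b; rewrite !RF -all_predI.
by split; apply: eq_in_all => i /Ff /(_ g d a b) [].
Qed.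

Lemma set_G_disjunction_all (I : eqType) (s : seq I) F R f :
  (forall g d, R g d = all (fun i => F i g d) s) ->
  {in s, forall i, set_G_disjunction (F i) f} -> set_G_disjunction R f.
Proof.
move=> RF Ff g d a b; rewrite !RF -all_predI.
by split; apply: eq_in_all => i /Ff /(_ g d a b) [].
Qed.

Lemma rep_designated R L :
  is_rep one zero R L ->
  {in based_list L, forall D : {set V}, designated one zero D}.
Proof. by case=> _ /allP Ldes _; apply/based_listP => p /Ldes /andP. Qed.

Lemma rep_dc_compatibleP R L :
  is_rep one zero R L ->
  dc_compatible (based_list L) <->
  (exists fc, {in based_list L, forall D : {set V}, conj_on D fc}) /\
  (exists fd, {in based_list L, forall D : {set V}, disj_on D fd}).
Proof.
by move=> Lrep; rewrite dc_compatible_DC2; exact: DC2_conj_disjP (rep_designated Lrep).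
Qed.

Lemma rep_set_G_conjunction R L f :
  is_rep one zero R L -> {in based_list L, forall D : {set V}, conj_on D f} ->
  set_G_conjunction R f.
Proof.
move=> [_ _ LR] /based_listP fL; apply: set_G_conjunction_all LR _ => p /fL [].
exact: mtr_set_G_conjunction.
Qed.

Lemma rep_set_G_disjunction R L f :
  is_rep one zero R L -> {in based_list L, forall D : {set V}, disj_on D f} ->
  set_G_disjunction R f.
Proof.
move=> [_ _ LR] /based_listP fL; apply: set_G_disjunction_all LR _ => p /fL [].
exact: mtr_set_G_disjunction.
Qed.

Definition irredundant L : Prop :=
  {in L &, forall p q : {set V} * {set V},
     p.1 \subset q.1 -> q.2 \subset p.2 -> p = q}.

Lemma mtrW (Dp Dc Dp' Dc' g d : {set V}) :
  Dp \subset Dp' -> Dc' \subset Dc -> mtr Dp' Dc' g d -> mtr Dp Dc g d.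
Proof.
move=> DpDp' Dc'Dc /implyP mtr'; apply/implyP => gDp.
have /set0Pn [x /setIP [xd xDc']] := mtr' (subset_trans gDp DpDp').
by apply/set0Pn; exists x; rewrite inE xd (subsetP Dc'Dc).
Qed.

(* A component implied by another one can be dropped. *)
Lemma minimal_rep_irredundant R L : minimal_rep one zero R L -> irredundant L.
Proof.
move=> [[_ Ldes LR] Lmin] p q pL qL pq1 qp2; apply/eqP/contraT => neq_pq.
have qL' : q \in rem p L.
  by move: qL; rewrite (perm_mem (perm_to_rem pL)) inE eq_sym (negPf neq_pq).
have : is_rep one zero R (rem p L).
  split; first by apply: contraTneq qL' => ->.
    by apply/allP => r /mem_rem; apply: (allP Ldes).
  move=> g d; rewrite LR (perm_all _ (perm_to_rem pL)) /=.
  by apply/andb_idl => /allP /(_ q qL'); apply: mtrW.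
move/Lmin; rewrite size_rem // leqNgt ltn_predL lt0n negbK size_eq0.
by move/eqP=> L0; rewrite L0 in pL.
Qed.

(* The pair [(k.1 :|: Z, ~: k.2 :|: W)] probes the [k]-th component alone: any
   other component rejecting it would be implied by the [k]-th one. *)
Lemma irredundant_all_mtr L k Z W : irredundant L -> k \in L ->
  all (fun p => mtr p.1 p.2 (k.1 :|: Z) (~: k.2 :|: W)) L =
  ~~ ((Z \subset k.1) && (W :&: k.2 == set0)).
Proof.
move=> irrL kL.
have mtr_k : mtr k.1 k.2 (k.1 :|: Z) (~: k.2 :|: W) =
    ~~ ((Z \subset k.1) && (W :&: k.2 == set0)).
  rewrite /mtr subUset subxx setIUl [~: _ :&: _]setIC setICr set0U /=.
  by rewrite implybE negb_and.
rewrite -mtr_k; apply/allP/idP => [/(_ k kL) // | k_ok p pL].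
have [-> // | neq_pk] := eqVneq p k.
apply/implyP => kp1; apply/set0Pn.
have : ~~ (p.2 \subset k.2).
  apply: contra neq_pk => pk2; apply/eqP/esym/irrL => //.
  exact: subset_trans (subsetUl _ _) kp1.
by case/subsetPn => x xp2 xk2; exists x; rewrite !inE xk2 xp2.
Qed.

Lemma minimal_rep_conj_on R L f :
  minimal_rep one zero R L -> set_G_conjunction R f ->
  {in based_list L, forall D : {set V}, conj_on D f}.
Proof.
move=> Lmin Rf; have irrL := minimal_rep_irredundant Lmin.
have [[_ _ LR] _] := Lmin; apply/based_listP => k kL; split=> a b.
  have [+ _] := Rf k.1 (~: k.2 :|: set0) a b.
  rewrite !LR -setUA !(irredundant_all_mtr _ _ irrL kL) set0I eqxx !andbT.
  by rewrite subUset !sub1set => /negb_inj.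
have [_ +] := Rf (k.1 :|: set0) (~: k.2) a b.
rewrite !LR !(irredundant_all_mtr _ _ irrL kL) sub0set.
by rewrite !setI_eq0 !disjoints1 !negbK.
Qed.

Lemma minimal_rep_disj_on R L f :
  minimal_rep one zero R L -> set_G_disjunction R f ->
  {in based_list L, forall D : {set V}, disj_on D f}.
Proof.
move=> Lmin Rf; have irrL := minimal_rep_irredundant Lmin.
have [[_ _ LR] _] := Lmin; apply/based_listP => k kL; split=> a b.
  have [_ +] := Rf k.1 (~: k.2 :|: set0) a b.
  rewrite !LR !(irredundant_all_mtr _ _ irrL kL) set0I eqxx !andbT !sub1set.
  by rewrite -negb_or => /negb_inj.
have [+ _] := Rf (k.1 :|: set0) (~: k.2) a b.
rewrite !LR -setUA !(irredundant_all_mtr _ _ irrL kL) sub0set setIUl setU_eq0.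
by rewrite !setI_eq0 !disjoints1 /= negb_and !negbK.
Qed.

Lemma minimal_rep_exists R :
  intersective_mixed one zero R -> exists L, minimal_rep one zero R L.
Proof.
case=> L0 L0rep.
have ex_size : exists n, `[< exists L, is_rep one zero R L /\ size L = n >].
  by exists (size L0); apply/asboolP; exists L0.
case: (ex_minnP ex_size) => _ /asboolP [L [Lrep <-]] Lmin.
by exists L; split=> // L' L'rep; apply: Lmin; apply/asboolP; exists L'.
Qed.

End Representations.

Section Formulas.
Variables (V : finType) (C : Type) (ar : C -> nat)
  (I : forall c : C, ('I_(ar c) -> V) -> V) (R : {set V} -> {set V} -> bool).

Lemma imgv_add v (G : form ar -> Prop) A :
  imgv I v (add G A) = imgv I v G :|: [set eval I v A].
Proof.
apply/setP => x; rewrite /imgv !inE; apply/asboolP/orP.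
  by case=> B [[GB | ->] <-]; [left; apply/asboolP; exists B | right].
case=> [/asboolP [B [GB <-]] | /eqP ->]; first by exists B; split; first left.
by exists A; split; first right.
Qed.

Definition const_img (G : form ar -> Prop) (X : {set V}) : Prop :=
  forall v, imgv I v G = X.

Lemma const_img_add G X A a :
  const_img G X -> (forall v, eval I v A = a) ->
  const_img (add G A) (X :|: [set a]).
Proof. by move=> GX Aa v; rewrite imgv_add GX Aa. Qed.

Lemma conseq_const (v0 : nat -> V) G D X Y :
  const_img G X -> const_img D Y -> conseq I R G D <-> R X Y.
Proof. by move=> GX DY; split=> [/(_ v0) | RXY v]; rewrite GX DY. Qed.

Definition const_ctx (K : V -> form ar) (X : {set V}) : form ar -> Prop :=
  fun A => exists2 x, x \in X & A = K x.

Lemma const_img_ctx K X :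
  (forall x v, eval I v (K x) = x) -> const_img (const_ctx K X) X.
Proof.
move=> Kx v; apply/setP => x; rewrite /imgv inE.
apply/asboolP/idP => [[_ [[y yX ->] <-]] | xX]; first by rewrite Kx.
by exists (K x); split; [exists x | rewrite Kx].
Qed.

Section Connective.
Variables (cj : form ar -> form ar -> form ar) (f : V -> V -> V).
Hypothesis eval_cj : forall v A B, eval I v (cj A B) = f (eval I v A) (eval I v B).

Lemma G_conjunctionP :
  constant_expressive I ->
  G_conjunction (conseq I R) cj <-> set_G_conjunction R f.
Proof.
move=> ce; split=> [Gcj g d a b | Rf G D A B].
  have [K Kx] := choice ce; pose v0 : nat -> V := fun=> a.
  have img X := const_img_ctx X Kx; have imgK X x := const_img_add (img X) (Kx x).
  have cjK v : eval I v (cj (K a) (K b)) = f a b by rewrite eval_cj !Kx.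
  have [+ +] := Gcj (const_ctx K g) (const_ctx K d) (K a) (K b).
  rewrite !(conseq_const v0 (const_img_add (img g) cjK) (img d)).
  rewrite !(conseq_const v0 (const_img_add (imgK g a) (Kx b)) (img d)).
  rewrite !(conseq_const v0 (img g) (const_img_add (img d) cjK)).
  rewrite !(conseq_const v0 (img g) (imgK d _)).
  by move=> Gl Gr; split; [apply/idP/idP => /Gl | apply/idP/andP => /Gr].
rewrite /conseq; split.
  by split=> h v; move: (h v); rewrite !imgv_add eval_cj (Rf _ _ _ _).1.
split=> [h | [h1 h2] v].
  by split=> v; move: (h v); rewrite !imgv_add eval_cj (Rf _ _ _ _).2 => /andP [].
by move: (h1 v) (h2 v); rewrite !imgv_add eval_cj (Rf _ _ _ _).2 => -> ->.
Qed.

Lemma G_disjunctionP :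
  constant_expressive I ->
  G_disjunction (conseq I R) cj <-> set_G_disjunction R f.
Proof.
move=> ce; split=> [Gdj g d a b | Rf G D A B].
  have [K Kx] := choice ce; pose v0 : nat -> V := fun=> a.
  have img X := const_img_ctx X Kx; have imgK X x := const_img_add (img X) (Kx x).
  have cjK v : eval I v (cj (K a) (K b)) = f a b by rewrite eval_cj !Kx.
  have [+ +] := Gdj (const_ctx K g) (const_ctx K d) (K a) (K b).
  rewrite !(conseq_const v0 (img g) (const_img_add (img d) cjK)).
  rewrite !(conseq_const v0 (img g) (const_img_add (imgK d a) (Kx b))).
  rewrite !(conseq_const v0 (const_img_add (img g) cjK) (img d)).
  rewrite !(conseq_const v0 (imgK g _) (img d)).
  by move=> Gr Gl; split; [apply/idP/idP => /Gr | apply/idP/andP => /Gl].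
rewrite /conseq; split.
  by split=> h v; move: (h v); rewrite !imgv_add eval_cj (Rf _ _ _ _).1.
split=> [h | [h1 h2] v].
  by split=> v; move: (h v); rewrite !imgv_add eval_cj (Rf _ _ _ _).2 => /andP [].
by move: (h1 v) (h2 v); rewrite !imgv_add eval_cj (Rf _ _ _ _).2 => -> ->.
Qed.

End Connective.
End Formulas.

Section Extension.
Variables (V : finType) (C : Type) (ar : C -> nat)
  (interp : forall c : C, ('I_(ar c) -> V) -> V).

Fixpoint ext_form (A : form ar) : form (ext_ar ar) :=
  match A with
  | Var n => Var (ext_ar ar) n
  | App c a => @App _ (ext_ar ar) (inl c) (fun i => ext_form (a i))
  end.

Lemma eval_ext_form fc fd v A :
  eval (ext_interp interp fc fd) v (ext_form A) = eval interp v A.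
Proof. by elim: A => //= c a IH; f_equal; apply: funext. Qed.

Lemma ext_constant_expressive fc fd :
  constant_expressive interp -> constant_expressive (ext_interp interp fc fd).
Proof.
by move=> ce x; have [A Ax] := ce x; exists (ext_form A) => v; rewrite eval_ext_form.
Qed.

Lemma eval_mk2 fc fd b v A B :
  eval (ext_interp interp fc fd) v (mk2 b A B) =
  (if b then fc else fd) (eval (ext_interp interp fc fd) v A)
                         (eval (ext_interp interp fc fd) v B).
Proof. by []. Qed.

Lemma admits_Gdisj_GconjP R :
  constant_expressive interp ->
  admits_Gdisj_Gconj interp R <->
  (exists fc, set_G_conjunction R fc) /\ (exists fd, set_G_disjunction R fd).
Proof.
move=> ce; have ce_ext fc fd := ext_constant_expressive fc fd ce.
split=> [[fc [fd []]] | [[fc Rfc] [fd Rfd]]].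
  rewrite (G_conjunctionP R (eval_mk2 fc fd true)) //.
  rewrite (G_disjunctionP R (eval_mk2 fc fd false)) //.
  by move=> Rfc Rfd; split; [exists fc | exists fd].
exists fc, fd; rewrite (G_conjunctionP R (eval_mk2 fc fd true)) //.
by rewrite (G_disjunctionP R (eval_mk2 fc fd false)).
Qed.

End Extension.

Unset Implicit Arguments.

Theorem theorem7p6 (V : finType) (one zero : V) (C : Type) (ar : C -> nat)
    (interp : forall c : C, ('I_(ar c) -> V) -> V)
    (R : {set V} -> {set V} -> bool) :
  one != zero ->
  intersective_mixed one zero R ->
  constant_expressive interp ->
  (admits_Gdisj_Gconj interp R <->
     (forall L, minimal_rep one zero R L -> dc_compatible (based_list L))) /\
  (admits_Gdisj_Gconj interp R <->
     (exists L, is_rep one zero R L /\ dc_compatible (based_list L))).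
Proof.
(* [one != zero] is implied by any representation, whose sets contain [one]
   and avoid [zero]. *)
move=> _ mixed ce; rewrite admits_Gdisj_GconjP //.
have i_ii :
    (exists fc, set_G_conjunction R fc) /\ (exists fd, set_G_disjunction R fd) ->
    forall L, minimal_rep one zero R L -> dc_compatible (based_list L).
  move=> [[fc Rfc] [fd Rfd]] L Lmin; apply/(rep_dc_compatibleP Lmin.1).
  by split; [exists fc; apply: minimal_rep_conj_on Lmin Rfc
            | exists fd; apply: minimal_rep_disj_on Lmin Rfd].
have ii_iii : (forall L, minimal_rep one zero R L -> dc_compatible (based_list L)) ->
    exists L, is_rep one zero R L /\ dc_compatible (based_list L).
  move=> ii; have [L Lmin] := minimal_rep_exists mixed.
  by exists L; split; [case: Lmin | apply: ii].
have iii_i : (exists L, is_rep one zero R L /\ dc_compatible (based_list L)) ->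
    (exists fc, set_G_conjunction R fc) /\ (exists fd, set_G_disjunction R fd).
  move=> [L [Lrep /(rep_dc_compatibleP Lrep) [[fc Lfc] [fd Lfd]]]].
  by split; [exists fc; apply: rep_set_G_conjunction Lrep Lfc
            | exists fd; apply: rep_set_G_disjunction Lrep Lfd].
by split; [split=> [/i_ii | /ii_iii/iii_i] | split=> [/i_ii/ii_iii | /iii_i]].
Qed.
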